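(* Let $\mathcal{E}$ be a multiclass tree ensemble with classes $\{0,\dots,C-1\}$, $F\subseteq\mathcal{F}$ a set of sensitive features, $c^{(1)},c^{(2)}$ classes, and $g>0$ with $\eta=\ln g$. The set of feasible solutions of the MILP consisting of constraints (C1)–(C5) below together with (Gap-multi) equals the set of feasible solutions of the MILP obtained by additionally imposing (Aff-multi) $\sum_{n\in\mathcal{L}_{c^{(1)}}\setminus\mathcal{U}}\left(l^{(1)}_n\,n.val-l^{(2)}_n\,n.val\right)+\sum_{n\in\mathcal{L}_{c^{(2)}}\setminus\mathcal{U}}\left(l^{(2)}_n\,n.val-l^{(1)}_n\,n.val\right)>2\eta$.
   Context: A decision tree is either a leaf $n$ with real value $n.val$ or an internal node with guard $X_f<\tau$ and children $n.yes$ (taken when $x_f<\tau$) and $n.no$. A multiclass tree ensemble has its trees partitioned into sets $\mathcal{T}_0,\dots,\mathcal{T}_{C-1}$, one per class; $\mathcal{L}_c$ denotes the set of leaves of trees in $\mathcal{T}_c$, and $\mathcal{A}$ the set of all leaves. For each feature $f$, $\tau_{f1}<\dots<\tau_{fK_f}$ are the distinct thresholds of guards on $f$. For an internal node $n$, $TSet(n)$ and $FSet(n)$ are the leaves of the subtrees rooted at $n.yes$ and $n.no$. Variables: for $c\in\{1,2\}$, binary $p^{(c)}_{fk}\in\{0,1\}$ for each feature $f$ and $k\le K_f$, and continuous $0\le l^{(c)}_n\le1$ for each leaf $n$. (C1) $p^{(c)}_{f1}\le\dots\le p^{(c)}_{fK_f}$ for each $f$; (C2) for each tree, the sum of $l^{(c)}_n$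 over its leaves is $1$; (C3) for each root node with guard $X_f<\tau_{fk}$: $1-\sum_{n\in FSet}l^{(c)}_n=p^{(c)}_{fk}=\sum_{n\in TSet}l^{(c)}_n$; (C4) for each non-root internal node with guard $X_f<\tau_{fk}$: $1-\sum_{n\in FSet}l^{(c)}_n\ge p^{(c)}_{fk}\ge\sum_{n\in TSet}l^{(c)}_n$; (C5) $p^{(1)}_{fk}=p^{(2)}_{fk}$ for all $f\notin F$ and all $k$; (Gap-multi) for every class $c\ne c^{(1)}$: $\sum_{n\in\mathcal{L}_{c^{(1)}}}l^{(1)}_n\,n.val>\sum_{n\in\mathcal{L}_c}l^{(1)}_n\,n.val+\eta$, and for every class $c\ne c^{(2)}$: $\sum_{n\in\mathcal{L}_{c^{(2)}}}l^{(2)}_n\,n.val>\sum_{n\in\mathcal{L}_c}l^{(2)}_n\,n.val+\eta$. A leaf is unaffected if no guard on the path from its tree's root to it involves a feature of $F$; $\mathcal{U}$ is the set of unaffected leaves. *)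

From Stdlib Require Import Reals List.
Import ListNotations.
Open Scope R_scope.

(* A decision tree: a leaf with real value, or an internal node with guard
   X_f < tau (feature index f, threshold tau), children yes (taken when
   x_f < tau) and no. *)
Inductive tree : Type :=
| Leaf (val : R)
| Node (f : nat) (tau : R) (yes no : tree).

(* A leaf of a tree is identified by its path from the root
   (true = yes-branch, false = no-branch).  [leaves t] lists, for every leaf,
   (path, value, features of the guards on the path from the root). *)
Fixpoint leaves (t : tree) : list (list bool * R * list nat) :=
  match t with
  | Leaf v => [([], v, [])]
  | Node f _ y n =>
      map (fun '(p, v, fs) => (true :: p, v, f :: fs)) (leaves y) ++
      map (fun '(p, v, fs) => (false :: p, v, f :: fs)) (leaves n)
  end.

Fixpoint inodes (t : tree) : list (list bool * nat * R * tree * tree) :=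
  match t with
  | Leaf _ => []
  | Node f tau y n =>
      ([], f, tau, y, n) ::
      map (fun '(p, g, s, a, b) => (true :: p, g, s, a, b)) (inodes y) ++
      map (fun '(p, g, s, a, b) => (false :: p, g, s, a, b)) (inodes n)
  end.

Definition Rsum (l : list R) : R := fold_right Rplus 0 l.

(* A multiclass ensemble: a list of (class label, tree); the tree with
   position i in the list has index i.  T_c = trees labelled c. *)
Definition ensemble := list (nat * tree).

Definition indexed (E : ensemble) : list (nat * (nat * tree)) :=
  combine (seq 0 (length E)) E.

Definition is_threshold (E : ensemble) (f : nat) (tau : R) : Prop :=
  exists c t p y n, In (c, t) E /\ In (p, f, tau, y, n) (inodes t).

(* Leaf variables l_n: indexed by (tree index, path). *)
Definition leafvar := nat -> list bool -> R.
(* Binary variables p_{fk}: indexed by feature f and threshold tau_{fk}. *)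
Definition splitvar := nat -> R -> bool.

Definition b2R (b : bool) : R := if b then 1 else 0.

Definition sub_sum (l : leafvar) (i : nat) (p : list bool) (s : tree) : R :=
  Rsum (map (fun '(q, _, _) => l i (p ++ q)) (leaves s)).

Definition C1 (E : ensemble) (pv : splitvar) : Prop :=
  forall f tau tau', is_threshold E f tau -> is_threshold E f tau' ->
    tau < tau' -> (pv f tau = true -> pv f tau' = true).

Definition Cbounds (E : ensemble) (l : leafvar) : Prop :=
  forall i c t, In (i, (c, t)) (indexed E) ->
    forall p v fs, In (p, v, fs) (leaves t) -> 0 <= l i p <= 1.

Definition C2 (E : ensemble) (l : leafvar) : Prop :=
  forall i c t, In (i, (c, t)) (indexed E) ->
    Rsum (map (fun '(p, _, _) => l i p) (leaves t)) = 1.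

Definition C34 (E : ensemble) (pv : splitvar) (l : leafvar) : Prop :=
  forall i c t, In (i, (c, t)) (indexed E) ->
    forall p f tau y n, In (p, f, tau, y, n) (inodes t) ->
      let T := sub_sum l i (p ++ [true]) y in
      let Fs := sub_sum l i (p ++ [false]) n in
      match p with
      | [] => 1 - Fs = b2R (pv f tau) /\ b2R (pv f tau) = T
      | _ :: _ => 1 - Fs >= b2R (pv f tau) /\ b2R (pv f tau) >= T
      end.

Definition C5 (E : ensemble) (F : nat -> Prop) (p1 p2 : splitvar) : Prop :=
  forall f tau, ~ F f -> is_threshold E f tau -> p1 f tau = p2 f tau.

Definition class_sum (E : ensemble) (c : nat)
    (keep : list nat -> Prop) (w : nat -> list bool -> R)
    (keepb : forall fs, {keep fs} + {~ keep fs}) : R :=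
  Rsum (map (fun '(i, (c', t)) =>
    if Nat.eqb c' c then
      Rsum (map (fun '(p, v, fs) => if keepb fs then w i p * v else 0) (leaves t))
    else 0) (indexed E)).

Definition all_leaves (fs : list nat) : Prop := True.
Definition all_leaves_dec (fs : list nat) : {all_leaves fs} + {~ all_leaves fs} :=
  left I.

(* A leaf is unaffected iff no guard on its root path involves a feature of F;
   [affected F fs] holds for leaves NOT in U. *)
Definition affected (F : nat -> Prop) (fs : list nat) : Prop :=
  exists f, In f fs /\ F f.

Definition score (E : ensemble) (c : nat) (l : leafvar) : R :=
  class_sum E c all_leaves l all_leaves_dec.

Definition Gap (E : ensemble) (C : nat) (c1 c2 : nat) (eta : R)
    (l1 l2 : leafvar) : Prop :=
  (forall c, (c < C)%nat -> c <> c1 -> score E c1 l1 > score E c l1 + eta) /\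
  (forall c, (c < C)%nat -> c <> c2 -> score E c2 l2 > score E c l2 + eta).

Definition Aff (E : ensemble) (F : nat -> Prop)
    (Fdec : forall fs, {affected F fs} + {~ affected F fs})
    (c1 c2 : nat) (eta : R) (l1 l2 : leafvar) : Prop :=
  class_sum E c1 (affected F) (fun i p => l1 i p - l2 i p) Fdec +
  class_sum E c2 (affected F) (fun i p => l2 i p - l1 i p) Fdec > 2 * eta.

Definition base_constraints (E : ensemble) (F : nat -> Prop)
    (p1 p2 : splitvar) (l1 l2 : leafvar) : Prop :=
  C1 E p1 /\ C1 E p2 /\ Cbounds E l1 /\ Cbounds E l2 /\
  C2 E l1 /\ C2 E l2 /\ C34 E p1 l1 /\ C34 E p2 l2 /\ C5 E F p1 p2.

(* Under (C2)-(C4) and binary split variables, the leaf variables of each tree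
   are the 0/1 indicator of the leaf reached by following the split decisions
   [p] from the root.  That leaf depends only on [p] at guards along its path,
   so by (C5) the two copies [l1] and [l2] agree on every unaffected leaf.
   Hence the affected sums in (Aff-multi) are the full score differences
   [score c1 l1 - score c1 l2] and [score c2 l2 - score c2 l1], and
   (Aff-multi) is the sum of (Gap-multi) for copy 1 at class [c2] and for
   copy 2 at class [c1]. *)

From Stdlib Require Import Reals List Lra.
Import ListNotations.
Open Scope R_scope.

Lemma Rsum_app (a b : list R) : Rsum (a ++ b) = Rsum a + Rsum b.
Proof. induction a as [|x a IH]; simpl; [ring | rewrite IH; ring]. Qed.

Lemma Rsum_map_minus {A} (f g : A -> R) (l : list A) :
  Rsum (map (fun x => f x - g x) l) = Rsum (map f l) - Rsum (map g l).
Proof. induction l as [|x l IH]; simpl; [ring | rewrite IH; ring]. Qed.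

Lemma Rsum_map_nonneg {A} (f : A -> R) (l : list A) :
  (forall x, In x l -> 0 <= f x) -> 0 <= Rsum (map f l).
Proof.
  induction l as [|x l IH]; simpl; intros Hf; [lra|].
  assert (0 <= f x) by auto.
  assert (0 <= Rsum (map f l)) by auto.
  lra.
Qed.

Lemma b2R_01 (b : bool) : b2R b = 0 \/ b2R b = 1.
Proof. destruct b; simpl; auto. Qed.

Section TreeLeaves.

Variables (f : nat) (tau : R) (y n : tree).

Lemma in_leaves_yes q v fs :
  In (q, v, fs) (leaves y) -> In (true :: q, v, f :: fs) (leaves (Node f tau y n)).
Proof.
  intros H; simpl; apply in_or_app; left.
  exact (in_map (fun '(p, v, fs) => (true :: p, v, f :: fs)) _ _ H).
Qed.

Lemma in_leaves_no q v fs :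
  In (q, v, fs) (leaves n) -> In (false :: q, v, f :: fs) (leaves (Node f tau y n)).
Proof.
  intros H; simpl; apply in_or_app; right.
  exact (in_map (fun '(p, v, fs) => (false :: p, v, f :: fs)) _ _ H).
Qed.

Lemma in_leaves_Node q v fs :
  In (q, v, fs) (leaves (Node f tau y n)) ->
  (exists q' fs', q = true :: q' /\ fs = f :: fs' /\ In (q', v, fs') (leaves y)) \/
  (exists q' fs', q = false :: q' /\ fs = f :: fs' /\ In (q', v, fs') (leaves n)).
Proof.
  simpl; intros H; apply in_app_or in H.
  destruct H as [H | H]; apply in_map_iff in H;
    destruct H as [[[q' v'] fs'] [Heq H]]; injection Heq as <- <- <-;
    [left | right]; eauto.
Qed.

Lemma in_inodes_yes p g s a b :
  In (p, g, s, a, b) (inodes y) -> In (true :: p, g, s, a, b) (inodes (Node f tau y n)).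
Proof.
  intros H; simpl; right; apply in_or_app; left.
  exact (in_map (fun '(p, g, s, a, b) => (true :: p, g, s, a, b)) _ _ H).
Qed.

Lemma in_inodes_no p g s a b :
  In (p, g, s, a, b) (inodes n) -> In (false :: p, g, s, a, b) (inodes (Node f tau y n)).
Proof.
  intros H; simpl; right; apply in_or_app; right.
  exact (in_map (fun '(p, g, s, a, b) => (false :: p, g, s, a, b)) _ _ H).
Qed.

End TreeLeaves.

Definition leaf_sum (m : list bool -> R) (s : tree) : R :=
  Rsum (map (fun '(q, _, _) => m q) (leaves s)).

Lemma leaf_sum_Node m f tau y n :
  leaf_sum m (Node f tau y n) =
  leaf_sum (fun q => m (true :: q)) y + leaf_sum (fun q => m (false :: q)) n.
Proof.
  unfold leaf_sum; simpl; rewrite map_app, Rsum_app, !map_map.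
  f_equal; f_equal; apply map_ext; intros [[q v] fs]; reflexivity.
Qed.

Definition flow_bounds (pv : splitvar) (m : list bool -> R) (s : tree) : Prop :=
  forall q f tau y n, In (q, f, tau, y, n) (inodes s) ->
    1 - leaf_sum (fun q' => m ((q ++ [false]) ++ q')) n >= b2R (pv f tau) /\
    b2R (pv f tau) >= leaf_sum (fun q' => m ((q ++ [true]) ++ q')) y.

Lemma flow_bounds_yes pv m f tau y n :
  flow_bounds pv m (Node f tau y n) -> flow_bounds pv (fun q => m (true :: q)) y.
Proof. intros H q g s a b Hq; exact (H _ _ _ _ _ (in_inodes_yes f tau y n _ _ _ _ _ Hq)). Qed.

Lemma flow_bounds_no pv m f tau y n :
  flow_bounds pv m (Node f tau y n) -> flow_bounds pv (fun q => m (false :: q)) n.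
Proof. intros H q g s a b Hq; exact (H _ _ _ _ _ (in_inodes_no f tau y n _ _ _ _ _ Hq)). Qed.

(* Product of the split decisions along the path [q]: 1 on the leaf reached
   by following [pv] from the root, 0 on every other leaf. *)
Fixpoint path_weight (pv : splitvar) (s : tree) (q : list bool) : R :=
  match s, q with
  | Leaf _, _ => 1
  | Node f tau y n, true :: q' => b2R (pv f tau) * path_weight pv y q'
  | Node f tau y n, false :: q' => (1 - b2R (pv f tau)) * path_weight pv n q'
  | Node _ _ _ _, [] => 0
  end.

Lemma split_mass_01 r b sy sn :
  (r = 0 \/ r = 1) -> (b = 0 \/ b = 1) -> 0 <= sy -> 0 <= sn -> sy + sn = r ->
  1 - sn >= b -> b >= sy ->
  sy = r * b /\ sn = r * (1 - b).
Proof. intros [-> | ->] [-> | ->]; lra. Qed.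

Lemma Rmult_01 r b : (r = 0 \/ r = 1) -> (b = 0 \/ b = 1) -> r * b = 0 \/ r * b = 1.
Proof. intros [-> | ->] [-> | ->]; lra. Qed.

(* Total mass [r] rather than 1, so that the induction applies to the subtree
   on the branch not chosen by [pv], which carries mass 0. *)
Lemma leaf_weight_path_weight (pv : splitvar) (s : tree) :
  forall (m : list bool -> R) (r : R), (r = 0 \/ r = 1) ->
  (forall q v fs, In (q, v, fs) (leaves s) -> 0 <= m q) ->
  flow_bounds pv m s -> leaf_sum m s = r ->
  forall q v fs, In (q, v, fs) (leaves s) -> m q = r * path_weight pv s q.
Proof.
  induction s as [v0 | f tau y IHy n IHn];
    intros m r Hr Hnn Hflow Hsum q v fs Hq.
  - destruct Hq as [Hq | []]; injection Hq as <- _ _.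
    unfold leaf_sum in Hsum; simpl in *; lra.
  - set (my := fun q => m (true :: q)); set (mn := fun q => m (false :: q)).
    rewrite leaf_sum_Node in Hsum.
    set (b := b2R (pv f tau)).
    assert (Hb : b = 0 \/ b = 1) by apply b2R_01.
    assert (Hy0 : 0 <= leaf_sum my y).
    { apply Rsum_map_nonneg; intros [[q' v'] fs'] H.
      exact (Hnn _ _ _ (in_leaves_yes f tau y n _ _ _ H)). }
    assert (Hn0 : 0 <= leaf_sum mn n).
    { apply Rsum_map_nonneg; intros [[q' v'] fs'] H.
      exact (Hnn _ _ _ (in_leaves_no f tau y n _ _ _ H)). }
    destruct (Hflow [] f tau y n (or_introl eq_refl)) as [Hno Hyes].
    destruct (split_mass_01 r b _ _ Hr Hb Hy0 Hn0 Hsum Hno Hyes) as [Sy Sn].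
    destruct (in_leaves_Node f tau y n q v fs Hq)
      as [(q' & fs' & -> & -> & Hq') | (q' & fs' & -> & -> & Hq')]; simpl; fold b.
    + transitivity (r * b * path_weight pv y q'); [|ring].
      apply (IHy my (r * b) (Rmult_01 r b Hr Hb)) with (v := v) (fs := fs');
        [| exact (flow_bounds_yes pv m f tau y n Hflow) | exact Sy | exact Hq'].
      intros q'' v'' fs'' H; exact (Hnn _ _ _ (in_leaves_yes f tau y n _ _ _ H)).
    + assert (Hnb : 1 - b = 0 \/ 1 - b = 1) by lra.
      transitivity (r * (1 - b) * path_weight pv n q'); [|ring].
      apply (IHn mn (r * (1 - b)) (Rmult_01 r _ Hr Hnb)) with (v := v) (fs := fs');
        [| exact (flow_bounds_no pv m f tau y n Hflow) | exact Sn | exact Hq'].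
      intros q'' v'' fs'' H; exact (Hnn _ _ _ (in_leaves_no f tau y n _ _ _ H)).
Qed.

Lemma path_weight_ext (pv1 pv2 : splitvar) (s : tree) :
  forall q v fs, In (q, v, fs) (leaves s) ->
  (forall f tau, In f fs -> (exists p y n, In (p, f, tau, y, n) (inodes s)) ->
     pv1 f tau = pv2 f tau) ->
  path_weight pv1 s q = path_weight pv2 s q.
Proof.
  induction s as [v0 | f tau y IHy n IHn]; intros q v fs Hq Hagree; [reflexivity|].
  destruct (in_leaves_Node f tau y n q v fs Hq)
    as [(q' & fs' & -> & -> & Hq') | (q' & fs' & -> & -> & Hq')]; simpl;
    rewrite (Hagree f tau (or_introl eq_refl)) by (exists [], y, n; left; reflexivity);
    f_equal.
  - apply (IHy q' v fs' Hq'); intros g s Hg (p & a & b & Hp).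
    apply Hagree; [right; exact Hg|].
    exists (true :: p), a, b; exact (in_inodes_yes f tau y n _ _ _ _ _ Hp).
  - apply (IHn q' v fs' Hq'); intros g s Hg (p & a & b & Hp).
    apply Hagree; [right; exact Hg|].
    exists (false :: p), a, b; exact (in_inodes_no f tau y n _ _ _ _ _ Hp).
Qed.

Lemma C34_flow_bounds E pv l i c t :
  C34 E pv l -> In (i, (c, t)) (indexed E) -> flow_bounds pv (l i) t.
Proof.
  intros H34 Hi p f tau y n Hp.
  specialize (H34 i c t Hi p f tau y n Hp); simpl in H34; unfold sub_sum in H34; unfold leaf_sum.
  destruct p; lra.
Qed.

Lemma leafvar_path_weight E pv l :
  Cbounds E l -> C2 E l -> C34 E pv l ->
  forall i c t, In (i, (c, t)) (indexed E) ->
  forall q v fs, In (q, v, fs) (leaves t) -> l i q = path_weight pv t q.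
Proof.
  intros Hb H2 H34 i c t Hi q v fs Hq.
  rewrite (leaf_weight_path_weight pv t (l i) 1 (or_intror eq_refl)) with (v := v) (fs := fs);
    [ring | | exact (C34_flow_bounds E pv l i c t H34 Hi) | exact (H2 i c t Hi) | exact Hq].
  intros q' v' fs' H; exact (proj1 (Hb i c t Hi q' v' fs' H)).
Qed.

Lemma unaffected_leafvar_eq E F p1 p2 l1 l2 :
  base_constraints E F p1 p2 l1 l2 ->
  forall i c t, In (i, (c, t)) (indexed E) ->
  forall q v fs, In (q, v, fs) (leaves t) -> ~ affected F fs -> l1 i q = l2 i q.
Proof.
  intros (_ & _ & Hb1 & Hb2 & H21 & H22 & H31 & H32 & H5) i c t Hi q v fs Hq Hunaff.
  rewrite (leafvar_path_weight E p1 l1 Hb1 H21 H31 i c t Hi q v fs Hq).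
  rewrite (leafvar_path_weight E p2 l2 Hb2 H22 H32 i c t Hi q v fs Hq).
  apply (path_weight_ext p1 p2 t q v fs Hq); intros f tau Hf (p & y & n & Hp).
  apply H5.
  - intros HF; apply Hunaff; exists f; auto.
  - exists c, t, p, y, n; split; [exact (in_combine_r _ _ _ _ Hi) | exact Hp].
Qed.

Lemma class_sum_affected_minus E F Fdec c (w1 w2 : leafvar) :
  (forall i c' t, In (i, (c', t)) (indexed E) ->
   forall q v fs, In (q, v, fs) (leaves t) -> ~ affected F fs -> w1 i q = w2 i q) ->
  class_sum E c (affected F) (fun i p => w1 i p - w2 i p) Fdec =
  score E c w1 - score E c w2.
Proof.
  intros Hunaff; unfold score, class_sum; rewrite <- Rsum_map_minus.
  f_equal; apply map_ext_in; intros [i [c' t]] Hi.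
  destruct (Nat.eqb c' c); [|ring].
  rewrite <- Rsum_map_minus; f_equal; apply map_ext_in; intros [[q v] fs] Hq; simpl.
  destruct (Fdec fs) as [Ha | Ha]; [ring|].
  rewrite (Hunaff i c' t Hi q v fs Hq Ha); ring.
Qed.

Theorem theorem4 (C : nat) (E : ensemble)
    (HE : Forall (fun ct => (fst ct < C)%nat) E)
    (F : nat -> Prop) (Fdec : forall fs, {affected F fs} + {~ affected F fs})
    (c1 c2 : nat) (Hc1 : (c1 < C)%nat) (Hc2 : (c2 < C)%nat) (Hc12 : c1 <> c2)
    (g : R) (Hg : 0 < g) :
  let eta := ln g in
  forall (p1 p2 : splitvar) (l1 l2 : leafvar),
    (base_constraints E F p1 p2 l1 l2 /\ Gap E C c1 c2 eta l1 l2) <->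
    (base_constraints E F p1 p2 l1 l2 /\ Gap E C c1 c2 eta l1 l2 /\
     Aff E F Fdec c1 c2 eta l1 l2).
Proof.
  intros eta p1 p2 l1 l2; split; [|tauto].
  intros [Hbase [Gap1 Gap2]]; split; [exact Hbase|]; split; [exact (conj Gap1 Gap2)|].
  pose proof (unaffected_leafvar_eq E F p1 p2 l1 l2 Hbase) as H12.
  assert (H21 : forall i c t, In (i, (c, t)) (indexed E) ->
    forall q v fs, In (q, v, fs) (leaves t) -> ~ affected F fs -> l2 i q = l1 i q).
  { intros; symmetry; eauto. }
  unfold Aff.
  rewrite (class_sum_affected_minus E F Fdec c1 l1 l2 H12),
          (class_sum_affected_minus E F Fdec c2 l2 l1 H21).
  specialize (Gap1 c2 Hc2 (not_eq_sym Hc12)); specialize (Gap2 c1 Hc1 Hc12).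
  lra.
Qed.
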